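(* For all positive integers $\alpha$ and $k$, the graph $G^{\alpha+1}_{3k+3\alpha-1}$ satisfies $\mathrm{ecrw}_\alpha(G^{\alpha+1}_{3k+3\alpha-1})\ge k+1$.
   Context: For positive integers $n,k$, the graph $G^n_k$ is defined as follows: let $A=\{a_1,\dots,a_n\}$, let $B$ be the set of 2-element subsets of $A$, and let $B_k=\{(W,\ell):W\in B,\ \ell\in[k]\}$. Then $V(G^n_k)=A\cup B_k$, and $a\in A$ is adjacent to $(W,\ell)\in B_k$ iff $a\in W$; there are no other edges. A tree-cut decomposition of a graph $G$ is a pair $\mathcal{T}=(T,\{X_t\}_{t\in V(T)})$ where $T$ is a tree and the bags $X_t\subseteq V(G)$ are pairwise disjoint (possibly empty) with $\bigcup_{t\in V(T)}X_t=V(G)$. For a node $t$ of $T$, let $T_1,\dots,T_m$ be the connected components of $T-t$ and $Z_i=\bigcup_{s\in V(T_i)}X_s$; $\mathrm{cross}_{\mathcal{T}}(t)$ is the number of edges of $G$ whose two endpoints lie in two distinct sets among $Z_1,\dots,Z_m$ (if $T$ has one node, $\mathrm{cross}_{\mathcal T}(t)=0$). The crossing number of $\mathcal{T}$ is $\max_{t}\mathrm{cross}_{\mathcal{T}}(t)$, and the thickness of $\mathcal{T}$ is $\max_t|X_t|$. $\mathrm{ecrw}_\alpha(G)$ is the minimum crossing number over tree-cut decompositions of $G$ of thickness at most $\alpha$. *)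

From mathcomp Require Import all_boot.
Set Implicit Arguments. Unset Strict Implicit. Unset Printing Implicit Defensive.

(* A = 'I_n (a_1..a_n), B = 2-element subsets of A, B_k = B x [k] with [k] ~ 'I_k. *)
Definition pairs (n : nat) := {W : {set 'I_n} | #|W| == 2}.
Definition Gvert (n k : nat) : finType := ('I_n + (pairs n * 'I_k))%type.

Definition Gadj (n k : nat) : rel (Gvert n k) := fun x y =>
  match x, y with
  | inl a, inr (W, _) => a \in val W
  | inr (W, _), inl a => a \in val W
  | _, _ => false
  end.

Definition is_tree (T : finType) (e : rel T) : Prop :=
  [/\ symmetric e, irreflexive e,
      (forall x y : T, connect e x y)
    & (forall s : seq T, uniq s -> 2 < size s -> ~~ cycle e s)].

Definition is_tcd (V : finType) (T : finType) (e : rel T) (X : T -> {set V}) : Prop :=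
  [/\ is_tree e,
      (forall t1 t2 : T, t1 != t2 -> [disjoint X t1 & X t2])
    & (forall v : V, exists t : T, v \in X t)].

Definition rel_minus (T : finType) (e : rel T) (t : T) : rel T :=
  fun x y => [&& e x y, x != t & y != t].

(* u and v lie in two distinct sets among Z_1..Z_m (components of T - t) *)
Definition crosses (V T : finType) (e : rel T) (X : T -> {set V}) (t : T) (u v : V) : bool :=
  [exists a : T, exists b : T,
     [&& u \in X a, v \in X b, a != t, b != t & ~~ connect (rel_minus e t) a b]].

Definition cross (V : finType) (adj : rel V) (T : finType) (e : rel T)
  (X : T -> {set V}) (t : T) : nat :=
  #|[set E : {set V} | [exists u : V, exists v : V,
       [&& E == [set u; v], adj u v & crosses e X t u v]]]|.

Definition thickness_le (V T : finType) (X : T -> {set V}) (alpha : nat) : Prop :=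
  forall t : T, #|X t| <= alpha.

Definition ecrw_ge (V : finType) (adj : rel V) (alpha c : nat) : Prop :=
  forall (T : finType) (e : rel T) (X : T -> {set V}),
    is_tcd e X -> thickness_le X alpha ->
    exists t : T, c <= cross adj e X t.

(* Let alpha, k >= 1, n = alpha + 1 and K = 3k + 3alpha - 1, and fix a
   tree-cut decomposition (T, X) of G^n_K of thickness at most alpha.
   - The n vertices of A do not fit in one bag, so two of them, a and b, lie
     in distinct bags X s and X s'.  Let W = {a, b}; the K copies (W, l) of W
     are all adjacent to both a and b.
   - Tree lemma: for distinct nodes s, s' there are nodes t1 <> s', t2 <> s
     such that every node r other than t1, t2 is separated from s' in
     T - t1 or from s in T - t2 (t1 = s, t2 = s' if s s' is a tree edge,
     otherwise t1 = t2 = an inner node of the s-s' path).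
   - Hence each copy (W, l) lies in X t1 or X t2, or its edge to b crosses at
     t1, or its edge to a crosses at t2.  Counting gives
       K <= |X t1| + |X t2| + cross(t1) + cross(t2) <= 2alpha + cross(t1) + cross(t2),
     and since K > 2alpha + 2k one of t1, t2 has crossing number >= k + 1.
   The file first develops the path and tree lemmas, then the counting
   lemmas on copies of a pair, and derives the theorem at the end. *)

From mathcomp Require Import all_boot zify.
Set Implicit Arguments. Unset Strict Implicit. Unset Printing Implicit Defensive.

Lemma connect_uniq_path (T : finType) (r : rel T) x y :
  connect r x y -> exists2 p, path r x p & uniq (x :: p) /\ y = last x p.
Proof. by move=> /connectP [p0 /shortenP [p pp up _] ->]; exists p. Qed.

Lemma path_rev_sym (T : Type) (r : rel T) x y s :
  symmetric r -> path r x (rcons s y) -> path r y (rcons (rev s) x).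
Proof.
move=> r_sym pr; rewrite -rev_cons -[y](last_rcons x s) -[x :: s](belast_rcons x s y).
by rewrite rev_path (eq_path (e' := r) _).
Qed.

Section TreeSeparation.

Variables (T : finType) (e : rel T).

Lemma path_minus_avoid t x s : path (rel_minus e t) x s -> t \notin s.
Proof.
elim: s x => [|y s IHs] x //= /andP [/and3P [_ _ yt] /IHs ts].
by rewrite in_cons negb_or eq_sym yt.
Qed.

Lemma path_minus_sub t x s : path (rel_minus e t) x s -> path e x s.
Proof. by apply: sub_path => a b /and3P []. Qed.

Lemma path_minus_intro t x s : t \notin x :: s -> path e x s -> path (rel_minus e t) x s.
Proof.
elim: s x => [|y s IHs] x //=; rewrite !in_cons !negb_or => /and3P [tx ty ts].
case/andP=> exy pys; rewrite /rel_minus exy (eq_sym x) (eq_sym y) tx ty.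
by rewrite IHs // in_cons negb_or ty.
Qed.

Hypothesis e_tree : is_tree e.

Let e_sym : symmetric e. Proof. by case: e_tree. Qed.
Let e_irr : irreflexive e. Proof. by case: e_tree. Qed.

(* In a tree, paths u q1 y and w p1 y from the two ends of an edge u w cannot
   meet for the first time at a common vertex y: with the edge they would
   close the cycle u q1 y (rev p1) w. *)
Lemma tree_edge_no_meeting u w y q1 p1 :
  e u w -> path e u (rcons q1 y) -> path e w (rcons p1 y) ->
  uniq (u :: rcons q1 y) -> uniq (w :: rcons p1 y) ->
  u \notin p1 -> w \notin q1 -> ~~ has (mem p1) q1 -> False.
Proof.
move=> euw pq1 pp1 uq1 up1 u_p1 w_q1 q1_p1.
have [_ _ _ no_cycle] := e_tree.
have wu : w != u by apply: contraTneq euw => ->; rewrite e_irr.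
move: uq1 up1; rewrite /= !mem_rcons !in_cons !negb_or !rcons_uniq.
move=> /and3P [/andP [uy u_q1] y_q1 uq1] /and3P [/andP [wy w_p1] y_p1 up1].
apply: (negP (no_cycle (u :: rcons q1 y ++ rcons (rev p1) w) _ _)).
- rewrite /= mem_cat !mem_rcons !in_cons mem_rev !negb_or uy u_q1 eq_sym wu u_p1 /=.
  rewrite cat_uniq !rcons_uniq mem_rev rev_uniq y_q1 uq1 w_p1 up1 /= andbT.
  apply/hasPn => z; rewrite mem_rcons in_cons mem_rev mem_rcons in_cons negb_or.
  case/orP => [/eqP -> | zp1]; first by rewrite wy w_q1.
  have zy : z != y by apply: contraNneq y_p1 => <-.
  by rewrite zy /=; apply: contra q1_p1 => zq1; apply/hasP; exists z.
- by rewrite /= size_cat !size_rcons addnS.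
- rewrite /= rcons_cat cat_path last_rcons pq1 rcons_path last_rcons e_sym euw andbT.
  exact: path_rev_sym pp1.
Qed.

(* If u w is an edge of a tree, no third vertex x can reach w while avoiding
   u and also reach u while avoiding w: cut the two routes at the first vertex
   of the second one lying on the first. *)
Lemma tree_edge_separates u w x :
  e u w -> x != u -> x != w ->
  connect (rel_minus e u) w x -> connect (rel_minus e w) u x -> False.
Proof.
move=> euw xu xw.
move=> /connect_uniq_path [p pp [up xp]] /connect_uniq_path [q pq [uq xq]].
have u_p := path_minus_avoid pp; have w_q := path_minus_avoid pq.
have {}pp := path_minus_sub pp; have {}pq := path_minus_sub pq.
have q_meets_p : has (mem p) q.
  case: q xq {pq uq w_q} => [|z q]; first by move=> xu'; rewrite xu' eqxx in xu.
  case: p xp {pp up u_p} => [|z' p]; first by move=> xw'; rewrite xw' eqxx in xw.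
  move=> xp' xq'; rewrite /= in xp' xq'; apply/hasP; exists (last z q); first exact: mem_last.
  by rewrite /= -xq' xp' mem_last.
case/split_find: q_meets_p pq uq w_q => y q1 q2 y_p q1_p.
case/path.splitP: y_p pp up u_p q1_p => p1 p2.
rewrite cat_path -cat_cons cat_uniq mem_cat mem_rcons in_cons.
move=> /andP [pp1 _] /andP [up1 _] /norP [/norP [_ u_p1] _] q1_p.
rewrite cat_path -cat_cons cat_uniq mem_cat mem_rcons in_cons.
move=> /andP [pq1 _] /andP [uq1 _] /norP [/norP [_ w_q1] _].
apply: (tree_edge_no_meeting euw pq1 pp1 uq1 up1 u_p1 w_q1).
apply: contra q1_p; apply: sub_has => z /= zp1.
by rewrite mem_cat mem_rcons in_cons zp1 orbT.
Qed.

(* A shortest route between two non-adjacent vertices of a tree passes through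
   an inner vertex whose removal disconnects them. *)
Lemma tree_nonadjacent_separator s s' :
  s != s' -> ~~ e s s' ->
  exists t, [/\ t != s, t != s' & ~~ connect (rel_minus e t) s s'].
Proof.
have [_ _ e_conn _] := e_tree.
have [[|v p] /= pp [up ->]] := connect_uniq_path (e_conn s s'); first by rewrite eqxx.
move=> ss' not_ess'; case/andP: pp => esv pv; case/andP: up => s_vp _.
have vs : v != s by apply: contraTneq esv => ->; rewrite e_irr.
have vs' : v != last v p by apply: contraNneq not_ess' => <-.
exists v; split => //; apply/negP => sv_s'.
apply: (tree_edge_separates (u := v) (w := s) (x := last v p)) sv_s' _.
- by rewrite e_sym.
- by rewrite eq_sym.
- by rewrite eq_sym.
by apply/connectP; exists p => //; apply: path_minus_intro.
Qed.

Lemma connect_minus_sym t : connect_sym (rel_minus e t).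
Proof.
apply: sym_connect_sym => x y.
by rewrite /rel_minus e_sym (andbC (x != t)).
Qed.

(* Any two distinct vertices s, s' of a tree admit vertices t1 <> s' and
   t2 <> s such that every other vertex r is cut off from s' in T - t1 or from
   s in T - t2.  (Take t1 = s, t2 = s' for an edge s s', and an inner vertex
   separating s from s' otherwise.) *)
Lemma tree_two_separators s s' :
  s != s' -> exists t1 t2, [/\ s' != t1, s != t2 &
    forall r, r != t1 -> r != t2 ->
      ~~ connect (rel_minus e t1) r s' || ~~ connect (rel_minus e t2) r s].
Proof.
move=> ss'; case: (boolP (e s s')) => [ess' | not_ess'].
  exists s, s'; split => // [|r rs rs']; first by rewrite eq_sym.
  rewrite -negb_and; apply/negP => /andP [rs'_conn rs_conn].
  by apply: (tree_edge_separates ess' rs rs'); rewrite connect_minus_sym.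
have [t [ts ts' sep]] := tree_nonadjacent_separator ss' not_ess'.
exists t, t; split; rewrite 1?eq_sym // => r _ _.
rewrite -negb_and; apply/negP => /andP [rs' rs].
by rewrite (connect_trans _ rs') // connect_minus_sym in sep.
Qed.

End TreeSeparation.

Lemma two_in_distinct_bags (I V T : finType) (X : T -> {set V}) (f : I -> V) alpha :
  injective f -> (forall v, exists t, v \in X t) -> thickness_le X alpha ->
  alpha < #|I| -> exists i j s s', [/\ f i \in X s, f j \in X s' & s != s'].
Proof.
move=> f_inj cover thick I_big.
have /card_gt0P [i _] : 0 < #|I| by apply: leq_ltn_trans I_big.
have [s fis] := cover (f i).
case: (boolP [forall j, f j \in X s]) => [/forallP all_in | /forallPn [j fjs]].
  have : #|f @: [set: I]| <= #|X s|.
    by apply/subset_leq_card/subsetP => _ /imsetP [j _ ->].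
  by rewrite card_imset // cardsT leqNgt (leq_trans _ I_big) ?ltnS.
have [s' fjs'] := cover (f j).
by exists i, j, s, s'; split => //; apply: contraNneq fjs => ->.
Qed.

Lemma card_cover4 (I : finType) (A B C D : {set I}) :
  (forall i, [|| i \in A, i \in B, i \in C | i \in D]) ->
  #|I| <= #|A| + #|B| + #|C| + #|D|.
Proof.
move=> covers; rewrite -cardsT.
have -> : [set: I] = A :|: B :|: C :|: D.
  by apply/setP => i; rewrite !inE -!orbA covers.
apply: leq_trans (leq_card_setU _ _) _; rewrite leq_add2r.
apply: leq_trans (leq_card_setU _ _) _; rewrite leq_add2r.
exact: leq_card_setU.
Qed.

Lemma crossesI (V T : finType) (e : rel T) (X : T -> {set V}) t u v r r' :
  u \in X r -> v \in X r' -> r != t -> r' != t ->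
  ~~ connect (rel_minus e t) r r' -> crosses e X t u v.
Proof.
by move=> ur vr' rt r't sep; apply/existsP; exists r; apply/existsP; exists r'; apply/and5P.
Qed.

Section CopiesOfAPair.

Variables (n K : nat) (T : finType) (e : rel T) (X : T -> {set Gvert n K}).
Variable W : pairs n.

Let copy (l : 'I_K) : Gvert n K := inr (W, l).

(* The edges joining an endpoint a of W to the copies of W are distinct, so
   those crossing at t are counted by cross t. *)
Lemma card_crossing_copies t a : a \in val W ->
  #|[set l | crosses e X t (copy l) (inl a)]| <= cross (@Gadj n K) e X t.
Proof.
move=> aW; rewrite -(card_in_imset (f := fun l => [set copy l; inl a])); last first.
  move=> l l' _ _ /setP /(_ (copy l)); rewrite !inE eqxx /= orbF.
  by move=> /esym /eqP [].
apply/subset_leq_card/subsetP => _ /imsetP [l + ->]; rewrite !inE => l_cross.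
by apply/existsP; exists (copy l); apply/existsP; exists (inl a); rewrite eqxx /= aW.
Qed.

Lemma card_copies_in_bag t : #|[set l | copy l \in X t]| <= #|X t|.
Proof.
rewrite -(card_in_imset (f := copy)); last by move=> l l' _ _ [].
by apply/subset_leq_card/subsetP => _ /imsetP [l l_in ->]; rewrite inE in l_in.
Qed.

(* Let the ends a, b of W lie in bags s, s', and let
   t1, t2 be separators as in tree_two_separators.  Then every copy of W lies
   in X t1 or X t2, or its edge to b crosses at t1, or its edge to a crosses
   at t2; hence the K copies are paid for by two bags and two crossings. *)
Lemma copies_bound a b s s' t1 t2 :
  a \in val W -> b \in val W -> (forall v, exists t, v \in X t) ->
  inl a \in X s -> inl b \in X s' -> s' != t1 -> s != t2 ->
  (forall r, r != t1 -> r != t2 ->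
     ~~ connect (rel_minus e t1) r s' || ~~ connect (rel_minus e t2) r s) ->
  K <= #|X t1| + #|X t2| + cross (@Gadj n K) e X t1 + cross (@Gadj n K) e X t2.
Proof.
move=> aW bW cover a_s b_s' s't1 st2 separates.
have covered l : [|| l \in [set l | copy l \in X t1], l \in [set l | copy l \in X t2],
    l \in [set l | crosses e X t1 (copy l) (inl b)]
  | l \in [set l | crosses e X t2 (copy l) (inl a)]].
  rewrite !inE; have [r lr] := cover (copy l).
  case: (eqVneq r t1) => [<- | rt1]; first by rewrite lr.
  case: (eqVneq r t2) => [<- | rt2]; first by rewrite lr orbT.
  case/orP: (separates r rt1 rt2) => sep.
  - by rewrite (crossesI lr b_s' rt1 s't1 sep) !orbT.
  - by rewrite (crossesI lr a_s rt2 st2 sep) !orbT.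
have := card_cover4 covered; rewrite card_ord => /leq_trans; apply.
have := card_copies_in_bag t1; have := card_copies_in_bag t2.
have := card_crossing_copies t1 bW; have := card_crossing_copies t2 aW.
lia.
Qed.

End CopiesOfAPair.

Theorem lemma3p3 (alpha k : nat) : 0 < alpha -> 0 < k ->
  ecrw_ge (@Gadj alpha.+1 (3 * k + 3 * alpha - 1)) alpha k.+1.
Proof.
move=> alpha_gt0 k_gt0 T e X [tree disj cover] thick.
set K := 3 * k + 3 * alpha - 1.
have A_big : alpha < #|'I_alpha.+1| by rewrite card_ord.
have [a [b [s [s' [a_s b_s' ss']]]]] :=
  two_in_distinct_bags (f := inl) (@inl_inj _ _) cover thick A_big.
have ab : a != b.
  by apply: contraTneq b_s' => <-; rewrite (disjointFr (disj _ _ ss') a_s).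
have W2 : #|[set a; b]| == 2 by rewrite cards2 ab.
pose W : pairs alpha.+1 := exist _ [set a; b] W2.
have [t1 [t2 [s't1 st2 separates]]] := tree_two_separators tree ss'.
have count :=
  copies_bound (W := W) (set21 a b) (set22 a b) cover a_s b_s' s't1 st2 separates.
case/orP: (orbN (k < cross (@Gadj alpha.+1 K) e X t1)) => [cross1_big | cross1_small].
  by exists t1.
by exists t2; move: (thick t1) (thick t2) count cross1_small; rewrite -leqNgt /K; lia.
Qed.
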